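(* Let $K_0,\dots,K_n$ be strictly concave kernel functions and let $S=S_\sigma$ be a simplex. Then for each $i=0,1,\dots,n$ the function $m_i:S\to\mathbb{R}$ is strictly concave. Consequently $\underline{m}=\min_{j=0,\dots,n}m_j:S\to[-\infty,\infty)$ is strictly concave.
   Context: Identify the torus $\mathbb{T}=\mathbb{R}/2\pi\mathbb{Z}$ with $[0,2\pi)$. A concave kernel function is a $2\pi$-periodic function $K:\mathbb{R}\to[-\infty,\infty)$ which is real-valued and concave on $(0,2\pi)$ with $\lim_{t\downarrow0}K(t)=\lim_{t\uparrow2\pi}K(t)$ existing in $[-\infty,\infty)$; strictly concave if strictly concave on $(0,2\pi)$. For $\mathbf{y}\in\mathbb{T}^n$, $y_0=0$, $y_{n+1}=2\pi$, $F(\mathbf{y},t)=K_0(t)+\sum_{j=1}^nK_j(t-y_j)$. For a permutation $\sigma$ of $\{1,\dots,n\}$ ($\sigma(0)=0,\sigma(n+1)=n+1$), the simplex is $S_\sigma=\{\mathbf{y}:0<y_{\sigma(1)}<\dots<y_{\sigma(n)}<2\pi\}$ (a convex open set when represented in $(0,2\pi)^n$), and for $\mathbf{y}\in S_\sigma$, $m_{\sigma(k)}(\mathbf{y})=\sup_{t\in[y_{\sigma(k)},y_{\sigma(k+1)}]}F(\mathbf{y},t)$, $k=0,\dots,n$. *)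

From HB Require Import structures.
From mathcomp Require Import all_boot all_order all_algebra.
From mathcomp Require Import fingroup perm.
From mathcomp Require Import all_classical all_reals all_analysis.
Set Implicit Arguments. Unset Strict Implicit. Unset Printing Implicit Defensive.
Import Order.TTheory GRing.Theory Num.Theory.
Local Open Scope classical_set_scope.
Local Open Scope ring_scope.

Section Kernels.
Variable R : realType.

(* A concave kernel function K : R -> [-oo, +oo), 2pi-periodic, real-valued and
   concave on (0,2pi), with lim_{t->0+} K = lim_{t->2pi-} K existing in
   [-oo,+oo); we use the convention K(0) equals this common limit. *)
Definition kernel_base (K : R -> \bar R) : Prop :=
  [/\ (forall t, K (t + 2 * pi) = K t),
      (forall t, K t != +oo%E),
      (forall t : R, (0 < t < 2 * pi)%R -> K t \is a fin_num),
      K t @[t --> 0^'+] --> K 0 &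
      K t @[t --> (2 * pi)^'-] --> K 0].

Definition concave_kernel (K : R -> \bar R) : Prop :=
  kernel_base K /\
  forall x y l : R, (0 < x < 2 * pi)%R -> (0 < y < 2 * pi)%R -> (0 <= l <= 1)%R ->
    ((l%:E * K x + (1 - l)%R%:E * K y) <= K (l * x + (1 - l) * y)%R)%E.

Definition strictly_concave_kernel (K : R -> \bar R) : Prop :=
  kernel_base K /\
  forall x y l : R, (0 < x < 2 * pi)%R -> (0 < y < 2 * pi)%R -> x != y -> (0 < l < 1)%R ->
    ((l%:E * K x + (1 - l)%R%:E * K y) < K (l * x + (1 - l) * y)%R)%E.

Variable n : nat.

(* nodes: y_0 = 0, y_j = y (j-1) for 1 <= j <= n, y_{n+1} = 2pi *)
Definition yext (y : 'I_n -> R) (k : nat) : R :=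
  if k == 0%N then 0 else
  if @insub _ (fun j : nat => j < n)%N 'I_n k.-1 is Some j then y j else 2 * pi.

(* sigma extended by sigma(0)=0, sigma(n+1)=n+1 *)
Definition sext (s : 'S_n) (k : nat) : nat :=
  if k == 0%N then 0%N else
  if @insub _ (fun j : nat => j < n)%N 'I_n k.-1 is Some j then (s j).+1 else k.

(* position k of index i, i.e. sigma(k) = i *)
Definition spos (s : 'S_n) (i : nat) : nat :=
  if i == 0%N then 0%N else
  if @insub _ (fun j : nat => j < n)%N 'I_n i.-1 is Some j then ((s^-1)%g j).+1
  else i.

Definition in_simplex (s : 'S_n) (y : 'I_n -> R) : Prop :=
  forall k : nat, (k <= n)%N -> yext y (sext s k) < yext y (sext s k.+1).

Definition Fsum (K : 'I_n.+1 -> R -> \bar R) (y : 'I_n -> R) (t : R) : \bar R :=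
  (K ord0 t + \sum_(j < n) K (lift ord0 j) (t - y j)%R)%E.

Definition mval (K : 'I_n.+1 -> R -> \bar R) (s : 'S_n) (i : 'I_n.+1)
  (y : 'I_n -> R) : \bar R :=
  let k := spos s i in
  ereal_sup [set Fsum K y t | t in `[yext y (sext s k), yext y (sext s k.+1)]].

Definition mmin (K : 'I_n.+1 -> R -> \bar R) (s : 'S_n) (y : 'I_n -> R) : \bar R :=
  \big[Order.min/+oo%E]_(i < n.+1) mval K s i y.

Definition convcomb (l : R) (y z : 'I_n -> R) : 'I_n -> R :=
  fun j => l * y j + (1 - l) * z j.

Definition strictly_concave_on (D : ('I_n -> R) -> Prop)
  (g : ('I_n -> R) -> \bar R) : Prop :=
  forall y z l, D y -> D z -> y <> z -> (0 < l < 1)%R ->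
    ((l%:E * g y + (1 - l)%R%:E * g z) < g (convcomb l y z))%E.

End Kernels.

From HB Require Import structures.
From mathcomp Require Import all_boot all_order all_algebra.
From mathcomp Require Import fingroup perm.
From mathcomp Require Import all_classical all_reals all_analysis.
From mathcomp Require Import ring lra.
Set Implicit Arguments. Unset Strict Implicit. Unset Printing Implicit Defensive.
Import Order.TTheory GRing.Theory Num.Theory.
Import numFieldNormedType.Exports.
Local Open Scope classical_set_scope.
Local Open Scope ring_scope.

(* No node y_j lies inside the arc, so for t on it each argument t - y_j stays in
   one branch, [0, 2pi] or [-2pi, 0], of its kernel, and which branch depends only
   on sigma, not on y.  On a branch a strictly concave kernel stays strictly concave
   up to the endpoints, where it takes its one-sided limits; hence F(y, .) is
   continuous on the arc with values in [-oo, +oo), attains its supremum at some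
   c_y, and is finite there.  For y <> z and w = l y + (1 - l) z, the point
   l c_y + (1 - l) c_z lies on the arc of w, and adding up the concavity
   inequalities of all kernels at that point gives
   l m_i(y) + (1 - l) m_i(z) <= F(w, l c_y + (1 - l) c_z) <= m_i(w),
   where the first inequality is an equality only if c_y = c_z and y = z.
   A minimum of strictly concave functions is strictly concave. *)

Lemma cvg_to_within {T U : topologicalType} (F : set_system U) {FF : Filter F}
  (g : U -> T) (D : set T) (x : T) :
  g @ F --> x -> (\forall e \near F, D (g e)) -> g @ F --> within D (nbhs x).
Proof.
move=> gx gD A /gx gA; near=> e; apply: (near gA e) => //.
by near: e.
Unshelve. all: by end_near.
Qed.

Section concave_in.
Variable R : realType.
Implicit Types (f : R -> R) (i : interval R) (a b : R).

Definition concave_in i f := forall x y l : R, x \in i -> y \in i -> 0 <= l <= 1 ->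
  l * f x + (1 - l) * f y <= f (l * x + (1 - l) * y).

Definition strictly_concave_in i f :=
  forall x y l : R, x \in i -> y \in i -> x != y -> 0 < l < 1 ->
  l * f x + (1 - l) * f y < f (l * x + (1 - l) * y).

Lemma strictly_concave_inW i f : strictly_concave_in i f -> concave_in i f.
Proof.
move=> fS x y l xi yi /andP[l0 l1].
have [->|l_neq0] := eqVneq l 0; first by rewrite !mul0r subr0 !mul1r !add0r.
have [->|l_neq1] := eqVneq l 1; first by rewrite subrr !mul0r !mul1r !addr0.
have [<-|xy] := eqVneq x y; first by rewrite -!mulrDl subrKC !mul1r.
by apply/ltW/fS; rewrite // !lt_neqAle eq_sym l_neq0 l_neq1 l0 l1.
Qed.

Lemma concave_in_chord i f p q r : concave_in i f -> p \in i -> r \in i ->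
  p < q < r -> (r - q) * f p + (q - p) * f r <= (r - p) * f q.
Proof.
move=> fC pi ri /andP[pq qr]; have rp : 0 < r - p by lra.
have l01 : 0 <= (r - q) / (r - p) <= 1.
  by rewrite divr_ge0 ?ler_pdivrMr //=; lra.
have := fC p r _ pi ri l01.
have -> : (r - q) / (r - p) * p + (1 - (r - q) / (r - p)) * r = q.
  by field; rewrite gt_eqF.
have -> : 1 - (r - q) / (r - p) = (q - p) / (r - p) by field; rewrite gt_eqF.
by rewrite -(ler_pM2l rp) mulrDr !mulrA !(mulrC (r - p)) !mulfK ?gt_eqF.
Qed.

Lemma concave_in_local_bound a b f x c t : concave_in `]a, b[ f ->
  0 < c -> a < x - c -> x + c < b -> `|t - x| < c ->
  c * `|f t - f x| <= `|t - x| * (`|f (x - c) - f x| + `|f (x + c) - f x|).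
Proof.
move=> fC c0 axc xcb.
have chord p q r : a < p -> p < q -> q < r -> r < b ->
    (r - q) * f p + (q - p) * f r <= (r - p) * f q.
  move=> ? ? ? ?; apply: (concave_in_chord fC); rewrite ?in_itv /=;
    by apply/andP; split; lra.
have [->|t_neq_x] := eqVneq t x; first by rewrite !subrr normr0 !mul0r mulr0.
have := ler_norm (f (x - c) - f x); have := ler_norm (f (x + c) - f x).
have := ler_norm (- (f (x - c) - f x)); have := ler_norm (- (f (x + c) - f x)).
rewrite !normrN -[X in X * `|_| <= _](ger0_norm (ltW c0)) -normrM ler_norml.
have [tx|xt] := ltP t x.
- rewrite (ltr0_norm (_ : t - x < 0)) ?subr_lt0 // => ? ? ? ? htx.
  have : (x + c - x) * f t + (x - t) * f (x + c) <= (x + c - t) * f x.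
    by apply: chord; lra.
  have : (x - t) * f (x - c) + (t - (x - c)) * f x <= (x - (x - c)) * f t.
    by apply: chord; lra.
  by move=> ? ?; apply/andP; split; nra.
- have {}xt : x < t by rewrite lt_neqAle eq_sym t_neq_x.
  rewrite (gtr0_norm (_ : 0 < t - x)) ?subr_gt0 // => ? ? ? ? htx.
  have : (x + c - t) * f x + (t - x) * f (x + c) <= (x + c - x) * f t.
    by apply: chord; lra.
  have : (t - x) * f (x - c) + (x - (x - c)) * f t <= (t - (x - c)) * f x.
    by apply: chord; lra.
  by move=> ? ?; apply/andP; split; nra.
Qed.

Lemma concave_in_continuous a b f x : concave_in `]a, b[ f -> x \in `]a, b[ ->
  {for x, continuous f}.
Proof.
rewrite in_itv /= => fC /andP[ax xb].
set c := Num.min (x - a) (b - x) / 2.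
have c0 : 0 < c by rewrite divr_gt0 // lt_min !subr_gt0 ax xb.
have [axc xcb] : a < x - c /\ x + c < b.
  have : Num.min (x - a) (b - x) <= x - a by rewrite ge_min lexx.
  have : Num.min (x - a) (b - x) <= b - x by rewrite ge_min lexx orbT.
  by rewrite /c; split; lra.
set M := `|f (x - c) - f x| + `|f (x + c) - f x|.
have M0 : 0 <= M by rewrite addr_ge0.
apply/cvgrPdist_le => e e0.
set d := c * e / (M + 1).
have M1 : 0 < M + 1 by lra.
have d0 : 0 < d by rewrite /d divr_gt0 // mulr_gt0.
have dM : d * (M + 1) = c * e by rewrite /d divfK // gt_eqF.
have cd0 : 0 < Num.min c d by rewrite lt_min c0 d0.
near=> t.
have : `|x - t| < Num.min c d by near: t; exact: (nbhsx_ballx x _ cd0).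
rewrite distrC lt_min => /andP[tc td].
have := concave_in_local_bound fC c0 axc xcb tc; rewrite -/M distrC => bound.
have : `|t - x| * M <= d * M by rewrite ler_wpM2r // ltW.
by rewrite -(ler_pM2l c0) distrC; nra.
Unshelve. all: by end_near.
Qed.

Lemma concave_in_closure a b f : a < b -> {within `[a, b], continuous f} ->
  concave_in `]a, b[ f -> concave_in `[a, b] f.
Proof.
move=> ab /subspace_continuousP fc fC x y l; rewrite !in_itv /= => xab yab l01.
(* Shrinking towards the midpoint maps [a, b] into ]a, b[ and commutes with
   convex combinations; let the shrinking factor tend to 0. *)
pose shrink u e := u + e * ((a + b) / 2 - u).
have shrink_in u e : a <= u <= b -> 0 < e <= 1 -> shrink u e \in `]a, b[.
  by rewrite in_itv /= /shrink => /andP[? ?] /andP[? ?]; apply/andP; split; nra.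
have near01 : \forall e \near (0 : R)^'+, 0 < e <= 1.
  near=> e; apply/andP; split; first by near: e; exact: nbhs_right_gt.
  by apply/ltW; near: e; exact: nbhs_right_lt.
have shrink_cvg u : a <= u <= b -> f (shrink u e) @[e --> 0^'+] --> f u.
  move=> uab; apply: cvg_comp (fc u _); last by rewrite /= in_itv.
  apply: cvg_to_within.
    have : shrink u e @[e --> 0] --> shrink u 0.
      by apply: cvgD; [exact: cvg_cst | apply: cvgM; [exact: cvg_id | exact: cvg_cst]].
    by rewrite /shrink mul0r addr0; exact: cvg_at_right_filter.
  by apply: filterS near01 => e /(shrink_in _ _ uab) /subset_itv_oo_cc.
have wab : a <= l * x + (1 - l) * y <= b by apply/andP; split; nra.
have lhs_cvg : l * f (shrink x e) + (1 - l) * f (shrink y e) @[e --> 0^'+] -->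
    l * f x + (1 - l) * f y.
  by apply: cvgD; apply: cvgM; [exact: cvg_cst | exact: shrink_cvg |
    exact: cvg_cst | exact: shrink_cvg].
apply: ler_cvg_to lhs_cvg (shrink_cvg _ wab) _.
apply: filterS near01 => e e01.
have -> : shrink (l * x + (1 - l) * y) e = l * shrink x e + (1 - l) * shrink y e.
  by rewrite /shrink; ring.
exact: fC (shrink_in _ _ xab e01) (shrink_in _ _ yab e01) l01.
Unshelve. all: by end_near.
Qed.

Lemma strictly_concave_in_closure a b f : a < b ->
  {within `[a, b], continuous f} -> strictly_concave_in `]a, b[ f ->
  strictly_concave_in `[a, b] f.
Proof.
move=> ab fc fS; have fC := concave_in_closure ab fc (strictly_concave_inW fS).
move=> x y l xab yab xy l01; have /andP[l0 l1] := l01.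
set w := l * x + (1 - l) * y.
have [aw wb] : a < w /\ w < b.
  by move: xab yab; rewrite !in_itv /= /w => /andP[? ?] /andP[? ?];
    case: (ltgtP x y) xy => // ? _; split; nra.
have mid_in u : u \in `[a, b] -> (u + w) / 2 \in `]a, b[.
  by rewrite !in_itv /= => /andP[? ?]; apply/andP; split; lra.
have mid_neq : (x + w) / 2 != (y + w) / 2.
  by apply: contra xy => /eqP ?; apply/eqP; lra.
(* w is also the l-combination of the interior points (x + w)/2, (y + w)/2. *)
have := fS _ _ l (mid_in x xab) (mid_in y yab) mid_neq l01.
have -> : l * ((x + w) / 2) + (1 - l) * ((y + w) / 2) = w by rewrite /w; field.
have wab : w \in `[a, b] by rewrite in_itv /=; apply/andP; split; lra.
have half : 0 <= (1 / 2 : R) <= 1 by apply/andP; split; lra.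
have mid u : 1 / 2 * u + (1 - 1 / 2) * w = (u + w) / 2 by field.
have := fC _ _ _ xab wab half; have := fC _ _ _ yab wab half.
by rewrite !mid => hy hx; nra.
Qed.

End concave_in.

Section itv_continuity.
Variable R : realType.

Lemma continuous_within_itv {T : topologicalType} (G : R -> T) a b :
  {in `]a, b[, continuous G} -> G t @[t --> a^'+] --> G a ->
  G t @[t --> b^'-] --> G b -> {within `[a, b], continuous G}.
Proof.
move=> Gin Ga Gb; apply/subspace_continuousP => x; rewrite /= in_itv /=.
move=> /andP[]; rewrite !le_eqVlt => /predU1P[<- _|ax].
  apply: cvg_trans (cvg_at_right_within Ga); apply: cvg_fmap2.
  by apply: within_subset => t; rewrite /= in_itv /= => /andP[].
move=> /predU1P[->|xb].
  apply: cvg_trans (cvg_at_left_within Gb); apply: cvg_fmap2.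
  by apply: within_subset => t; rewrite /= in_itv /= => /andP[].
by apply: cvg_within_filter; apply: Gin; rewrite in_itv /= ax xb.
Qed.

Lemma continuous_within_shift {T : topologicalType} (G : R -> T) p q c a b :
  {within `[p, q], continuous G} -> p <= a - c -> b - c <= q ->
  {within `[a, b], continuous (fun t => G (t - c))}.
Proof.
move=> /subspace_continuousP Gc pa bq; apply/subspace_continuousP => x xab.
have xc : x - c \in `[p, q].
  by move: xab; rewrite /= !in_itv /= => /andP[? ?]; apply/andP; split; lra.
apply: (cvg_comp (fun t => t - c) G _ (Gc _ xc)).
apply: cvg_to_within.
  by apply: cvg_within_filter; apply: cvgB; [exact: cvg_id | exact: cvg_cst].
apply: (within_nbhsW xab) => t; rewrite /= !in_itv /= => /andP[? ?].
by apply/andP; split; lra.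
Qed.

End itv_continuity.

Section ereal_continuity.
Variable R : realType.
Local Open Scope ereal_scope.

Lemma continuous_contract : continuous (@contract R).
Proof.
move=> x; apply/cvgrPdist_lt => e e0.
by apply: filterS (@nbhsx_ballx _ (\bar R) x e e0) => y; rewrite /ball /= /ereal_ball.
Qed.

Lemma ereal_EVT_max (G : R -> \bar R) (a b : R) : (a <= b)%R ->
  {within `[a, b], continuous G} ->
  exists2 c, c \in `[a, b] & forall t, t \in `[a, b] -> G t <= G c.
Proof.
move=> ab Gc; have cGc : {within `[a, b], continuous (@contract R \o G)}.
  by apply: within_continuous_comp => // y _; exact: continuous_contract.
have [c cab cmax] := EVT_max ab cGc.
by exists c => // t tab; rewrite -le_contract; exact: cmax.
Qed.

Lemma cvge_sum {T} (F : set_system T) {FF : Filter F} (I : Type) (r : seq I)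
  (g : I -> T -> \bar R) (L : I -> \bar R) :
  (forall i, g i t @[t --> F] --> L i) -> (forall i, L i < +oo) ->
  \sum_(i <- r) g i t @[t --> F] --> \sum_(i <- r) L i.
Proof.
move=> gL Lfin; elim: r => [|i r IH].
  by under eq_fun do rewrite big_nil; rewrite big_nil; exact: cvg_cst.
under eq_fun do rewrite big_cons; rewrite big_cons.
apply: cvgeD => //; apply: ltpinfty_adde_def; rewrite inE ?Lfin //.
exact: lte_sum_pinfty.
Qed.

End ereal_continuity.

Section kernel.
Variables (R : realType) (K : R -> \bar R).
Hypothesis K_kernel : strictly_concave_kernel K.
Let tp := 2 * (pi : R).

Let tp_gt0 : 0 < tp. Proof. by rewrite mulr_gt0 // pi_gt0. Qed.

Lemma kernel_periodic t : K (t + tp) = K t.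
Proof. by case: K_kernel => -[]. Qed.

Lemma kernel_lt_pinfty t : (K t < +oo)%E.
Proof. by rewrite ltey; case: K_kernel => -[]. Qed.

Lemma kernel_fin_num t : t \in `]0, tp[ -> K t \is a fin_num.
Proof. by rewrite in_itv /=; case: K_kernel => -[] _ _ Kfin _ _ _; exact: Kfin. Qed.

Lemma kernel_fin_num_neq0 t : t \in `]- tp, tp[ -> t != 0 -> K t \is a fin_num.
Proof.
rewrite in_itv /= => /andP[t1 t2] t0; have [tn|tp0] := ltP t 0.
  by rewrite -kernel_periodic kernel_fin_num // in_itv /=; apply/andP; split; lra.
by rewrite kernel_fin_num // in_itv /= t2 lt_neqAle eq_sym t0 tp0.
Qed.

Lemma kernel_at_right0 : K t @[t --> 0^'+] --> K 0.
Proof. by case: K_kernel => -[]. Qed.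

Let kernel_tp : K tp = K 0.
Proof. by rewrite -[in LHS](add0r tp) kernel_periodic. Qed.

Lemma kernel_at_left : K t @[t --> tp^'-] --> K tp.
Proof. by rewrite kernel_tp; case: K_kernel => -[]. Qed.

Lemma kernel_strictly_concave : strictly_concave_in `]0, tp[ (fine \o K).
Proof.
move=> x y l xin yin xy l01.
have win : l * x + (1 - l) * y \in `]0, tp[.
  move: xin yin l01; rewrite !in_itv /= => /andP[? ?] /andP[? ?] /andP[? ?].
  by apply/andP; split; nra.
have := K_kernel.2 x y l; move: (xin) (yin); rewrite !in_itv /= => xin' yin'.
move=> /(_ xin' yin' xy l01) /= K_lt.
by rewrite -lte_fin EFinD !EFinM !fineK ?kernel_fin_num.
Qed.

Lemma kernel_continuous : {in `]0, tp[, continuous K}.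
Proof.
move=> x xin; suff : K t @[t --> x] --> (fine (K x))%:E.
  by rewrite fineK ?kernel_fin_num.
apply/fine_cvgP; split.
  by apply: filterS (near_in_itvoo xin) => t; exact: kernel_fin_num.
exact: concave_in_continuous (strictly_concave_inW kernel_strictly_concave) xin.
Qed.

Lemma kernel_continuous_within : {within `[0, tp], continuous K}.
Proof.
exact: continuous_within_itv kernel_continuous kernel_at_right0 kernel_at_left.
Qed.

Lemma kernel_fin_num_cc t : K 0 \is a fin_num -> t \in `[0, tp] -> K t \is a fin_num.
Proof.
move=> K0; rewrite in_itv /= => /andP[]; rewrite !le_eqVlt.
move=> /predU1P[<- //|t0] /predU1P[->|ttp]; first by rewrite kernel_tp.
by apply: kernel_fin_num; rewrite in_itv /= t0 ttp.
Qed.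

Lemma kernel_fine_continuous_within : K 0 \is a fin_num ->
  {within `[0, tp], continuous (fine \o K)}.
Proof.
move=> K0; apply: continuous_within_itv.
- move=> x; exact: concave_in_continuous (strictly_concave_inW kernel_strictly_concave).
- by apply: fine_cvg; rewrite fineK //; exact: kernel_at_right0.
- apply: fine_cvg; rewrite fineK; first exact: kernel_at_left.
  by apply: kernel_fin_num_cc; rewrite // in_itv /= lexx ltW.
Qed.

Lemma kernel_leif_cc u v l : u \in `[0, tp] -> v \in `[0, tp] ->
  K u \is a fin_num -> K v \is a fin_num -> 0 < l < 1 ->
  K (l * u + (1 - l) * v) \is a fin_num /\
  l * fine (K u) + (1 - l) * fine (K v) <= fine (K (l * u + (1 - l) * v))
    ?= iff (u == v).
Proof.
move=> ucc vcc Ku Kv l01.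
have [<-|uv] := eqVneq u v.
  by rewrite -!mulrDl subrKC !mul1r; split => //; exact/leif_refl.
suff [Kw lt_w] : K (l * u + (1 - l) * v) \is a fin_num /\
    l * fine (K u) + (1 - l) * fine (K v) < fine (K (l * u + (1 - l) * v)).
  by split => //; apply/leifP.
have [K0|K0] := boolP (K 0 \is a fin_num).
  split; last exact: strictly_concave_in_closure tp_gt0
    (kernel_fine_continuous_within K0) kernel_strictly_concave _ _ _ ucc vcc uv l01.
  apply: kernel_fin_num_cc => //; move: ucc vcc l01; rewrite !in_itv /=.
  by move=> /andP[? ?] /andP[? ?] /andP[? ?]; apply/andP; split; nra.
(* Otherwise K 0 = -oo, so finiteness keeps u and v off the endpoints. *)
have interior t : t \in `[0, tp] -> K t \is a fin_num -> t \in `]0, tp[.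
  rewrite !in_itv /= => /andP[t0 ttp] Kt; apply/andP; split.
    by rewrite lt_neqAle t0 andbT; apply: contraNneq K0 => ->.
  by rewrite lt_neqAle ttp andbT; apply: contraNneq K0 => tE; rewrite -kernel_tp -tE.
have {ucc}uoo := interior _ ucc Ku; have {vcc}voo := interior _ vcc Kv.
split; last exact: kernel_strictly_concave.
apply: kernel_fin_num; move: uoo voo l01; rewrite !in_itv /=.
by move=> /andP[? ?] /andP[? ?] /andP[? ?]; apply/andP; split; nra.
Qed.

Lemma kernel_leif u v l :
  (u \in `[0, tp] /\ v \in `[0, tp]) \/ (u \in `[- tp, 0] /\ v \in `[- tp, 0]) ->
  K u \is a fin_num -> K v \is a fin_num -> 0 < l < 1 ->
  K (l * u + (1 - l) * v) \is a fin_num /\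
  l * fine (K u) + (1 - l) * fine (K v) <= fine (K (l * u + (1 - l) * v))
    ?= iff (u == v).
Proof.
move=> [[ucc vcc]|[ucc vcc]]; first exact: kernel_leif_cc.
have shift t : t \in `[- tp, 0] -> t + tp \in `[0, tp].
  by rewrite !in_itv /= => /andP[? ?]; apply/andP; split; lra.
rewrite -[K u]kernel_periodic -[K v]kernel_periodic -[K (l * u + _)]kernel_periodic.
have -> : l * u + (1 - l) * v + tp = l * (u + tp) + (1 - l) * (v + tp) by ring.
rewrite -(inj_eq (addIr tp)); exact: kernel_leif_cc (shift _ ucc) (shift _ vcc).
Qed.

End kernel.

Section simplex.
Variables (R : realType) (n : nat) (s : 'S_n).
Implicit Types (y z : 'I_n -> R).

(* node y k is y_sigma(k) in the paper's notation, with y_sigma(0) = 0 and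
   y_sigma(n+1) = 2pi; the coordinate y j sits at position spos s j.+1. *)
Definition node y k := yext y (sext s k).

Lemma node0 y : node y 0 = 0. Proof. by []. Qed.

Lemma node_last y : node y n.+1 = 2 * pi.
Proof.
rewrite /node /sext /yext /=; case: insubP => [j|_]; first by rewrite ltnn.
by case: insubP => [j|//]; rewrite ltnn.
Qed.

Lemma node_spos y (j : 'I_n) : node y (spos s j.+1) = y j.
Proof.
rewrite /node /spos /=; case: insubP => [j' _ /val_inj -> /=|]; last by rewrite ltn_ord.
rewrite /sext /=; case: insubP => [j'' _ /val_inj -> /=|]; last by rewrite ltn_ord.
rewrite permKV /yext /=; case: insubP => [j''' _ /val_inj -> //|].
by rewrite ltn_ord.
Qed.

Lemma spos_le_n (i : 'I_n.+1) : (spos s i <= n)%N.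
Proof.
rewrite /spos; case: eqP => // i0.
case: insubP => [j _ _|]; first by rewrite ltn_ord.
by rewrite -ltnS; case: i i0 => [[|i] hi].
Qed.

Lemma spos_gt0 (j : 'I_n) : (0 < spos s j.+1)%N.
Proof. by rewrite /spos /=; case: insubP. Qed.

Lemma node_convcomb l y z k :
  node (convcomb l y z) k = l * node y k + (1 - l) * node z k.
Proof.
rewrite /node /yext; case: eqP => _; first by rewrite !mulr0 addr0.
case: insubP => [j _ _ //|_].
by rewrite -mulrDl subrKC mul1r.
Qed.

Section sorted_nodes.
Variable y : 'I_n -> R.
Hypothesis y_in : in_simplex s y.

Lemma node_lt p q : (p < q)%N -> (q <= n.+1)%N -> node y p < node y q.
Proof.
elim: q => [//|q IH] pq qn.
have lt_q : node y q < node y q.+1 by apply: y_in.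
move: pq; rewrite ltnS leq_eqVlt => /orP[/eqP -> //|pq].
by apply: lt_trans lt_q; apply: IH => //; apply: ltnW.
Qed.

Lemma node_le p q : (p <= q)%N -> (q <= n.+1)%N -> node y p <= node y q.
Proof.
rewrite leq_eqVlt => /orP[/eqP -> //|pq qn].
exact/ltW/node_lt.
Qed.

Lemma simplex_coord_bounds j : 0 < y j < 2 * pi.
Proof.
have jn : (spos s j.+1 <= n)%N := spos_le_n (lift ord0 j).
rewrite -node_spos -(node0 y) -(node_last y).
by apply/andP; split; apply: node_lt; rewrite ?spos_gt0 ?ltnS ?(leqW jn).
Qed.

End sorted_nodes.
End simplex.

Section arc.
Variables (R : realType) (n : nat) (K : 'I_n.+1 -> R -> \bar R).
Hypothesis K_kernel : forall i, strictly_concave_kernel (K i).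
Variables (s : 'S_n) (i : 'I_n.+1).
Let k := spos s i.
Implicit Types (y z : 'I_n -> R) (j : 'I_n).

Lemma arc_bounds y : in_simplex s y ->
  [/\ 0 <= node s y k, node s y k < node s y k.+1 & node s y k.+1 <= 2 * pi].
Proof.
move=> y_in; have kn := spos_le_n s i.
rewrite -(node0 s y) -(node_last s y).
by split; [apply: (node_le y_in) | apply: (node_lt y_in) | apply: (node_le y_in)];
  rewrite // ?ltnS // leqW.
Qed.

Lemma arc_sub_cc y t : in_simplex s y -> t \in `[node s y k, node s y k.+1] ->
  t \in `[0, 2 * pi].
Proof.
move=> y_in; have [? ? ?] := arc_bounds y_in.
by rewrite !in_itv /= => /andP[? ?]; apply/andP; split; lra.
Qed.

Lemma arc_convcomb l y z cy cz : 0 < l < 1 ->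
  cy \in `[node s y k, node s y k.+1] -> cz \in `[node s z k, node s z k.+1] ->
  l * cy + (1 - l) * cz \in `[node s (convcomb l y z) k, node s (convcomb l y z) k.+1].
Proof.
rewrite !in_itv /= !node_convcomb => /andP[? ?] /andP[? ?] /andP[? ?].
by apply/andP; split; nra.
Qed.

Lemma coord_outside_arc y j : in_simplex s y ->
  if (spos s j.+1 <= k)%N then y j <= node s y k else node s y k.+1 <= y j.
Proof.
move=> y_in; rewrite -(node_spos s); have kn := spos_le_n s i.
have jn : (spos s j.+1 <= n)%N := spos_le_n s (lift ord0 j).
by case: ifP => jk; apply: (node_le y_in); rewrite ?leqW // ltnNge jk.
Qed.

Lemma arc_kernel_domain y j t : in_simplex s y ->
  t \in `[node s y k, node s y k.+1] ->
  t - y j \in (if (spos s j.+1 <= k)%N then `[0, 2 * pi] else `[- (2 * pi), 0]).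
Proof.
move=> y_in; have [a0 ab b2pi] := arc_bounds y_in.
have := coord_outside_arc j y_in; have /andP[yj0 yj2pi] := simplex_coord_bounds y_in j.
rewrite in_itv /= => side /andP[ta tb].
by case: ifP side => _ side; rewrite in_itv /=; apply/andP; split; lra.
Qed.

Lemma Fsum_lt_pinfty y t : (Fsum K y t < +oo)%E.
Proof.
by rewrite lte_add_pinfty ?lte_sum_pinfty // => *; exact: kernel_lt_pinfty.
Qed.

Lemma Fsum_fin_num y t : Fsum K y t \is a fin_num =
  (K ord0 t \is a fin_num) && [forall j, K (lift ord0 j) (t - y j) \is a fin_num].
Proof.
rewrite /Fsum fin_numD; congr andb; apply/sum_fin_numP/forallP => [+ j|+ j _ _].
  by apply; rewrite ?mem_index_enum.
by apply.
Qed.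

Lemma fine_Fsum y t : Fsum K y t \is a fin_num ->
  fine (Fsum K y t) = fine (K ord0 t) + \sum_(j < n) fine (K (lift ord0 j) (t - y j)).
Proof.
rewrite Fsum_fin_num => /andP[K0 /forallP Kj].
by rewrite /Fsum fineD ?sum_fine // ?fin_num_sum //; apply/sum_fin_numP.
Qed.

Lemma Fsum_continuous_within y : in_simplex s y ->
  {within `[node s y k, node s y k.+1], continuous (Fsum K y)}.
Proof.
move=> y_in; have [a0 ab b2pi] := arc_bounds y_in.
have term j : {within `[node s y k, node s y k.+1],
    continuous (fun t => K (lift ord0 j) (t - y j))}.
  have := coord_outside_arc j y_in.
  have /andP[yj0 yj2pi] := simplex_coord_bounds y_in j.
  have Kc := kernel_continuous_within (K_kernel (lift ord0 j)).
  case: ifP => _ side; first by apply: continuous_within_shift Kc _ _; lra.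
  have -> : (fun t => K (lift ord0 j) (t - y j)) =
      (fun t => K (lift ord0 j) (t - (y j - 2 * pi))).
    apply/funext => t; rewrite -[in LHS](kernel_periodic (K_kernel (lift ord0 j))).
    by congr (K _ _); ring.
  by apply: continuous_within_shift Kc _ _; lra.
have K0c : {within `[node s y k, node s y k.+1], continuous (K ord0)}.
  apply: continuous_subspaceW (kernel_continuous_within (K_kernel ord0)).
  by move=> t; exact: arc_sub_cc.
apply/subspace_continuousP => x xab; apply: cvgeD.
- by apply: ltpinfty_adde_def; rewrite inE ?lte_sum_pinfty // => *;
    exact: kernel_lt_pinfty.
- by move/subspace_continuousP : K0c; apply.
- apply: cvge_sum => j; last exact: kernel_lt_pinfty.
  by move/subspace_continuousP : (term j); apply.
Qed.

Lemma Fsum_fin_num_arc y t : in_simplex s y ->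
  t \in `]node s y k, node s y k.+1[ -> Fsum K y t \is a fin_num.
Proof.
move=> y_in; rewrite in_itv /= => /andP[ta tb]; have [a0 ab b2pi] := arc_bounds y_in.
rewrite Fsum_fin_num; apply/andP; split.
  apply: kernel_fin_num; first exact: K_kernel.
  by rewrite in_itv /=; apply/andP; split; lra.
apply/forallP => j; apply: kernel_fin_num_neq0; first exact: K_kernel.
  have := coord_outside_arc j y_in; have /andP[? ?] := simplex_coord_bounds y_in j.
  by rewrite in_itv /=; case: ifP => _ ?; apply/andP; split; lra.
have := coord_outside_arc j y_in.
by case: ifP => _ ?; [apply: lt0r_neq0 | apply: ltr0_neq0]; lra.
Qed.

Lemma mval_attained y : in_simplex s y ->
  exists2 c, c \in `[node s y k, node s y k.+1] &
    mval K s i y = Fsum K y c /\ Fsum K y c \is a fin_num.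
Proof.
move=> y_in; have [a0 ab b2pi] := arc_bounds y_in.
have [c cab cmax] := ereal_EVT_max (ltW ab) (Fsum_continuous_within y_in).
exists c => //; split.
  rewrite /mval /=; apply/eqP; rewrite eq_le; apply/andP; split.
    by apply: ge_ereal_sup => _ [t tab <-]; exact: cmax.
  by apply: ereal_sup_ubound; exists c.
set m := (node s y k + node s y k.+1) / 2.
have mab : m \in `]node s y k, node s y k.+1[.
  by rewrite in_itv /=; apply/andP; split; rewrite /m; lra.
have := Fsum_fin_num_arc y_in mab; rewrite !fin_numElt !Fsum_lt_pinfty !andbT.
move=> m_gtNy; apply: lt_le_trans m_gtNy (cmax _ _).
by move: mab; rewrite !in_itv /= => /andP[? ?]; apply/andP; split; lra.
Qed.

Lemma Fsum_leif l y z cy cz : in_simplex s y -> in_simplex s z -> 0 < l < 1 ->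
  cy \in `[node s y k, node s y k.+1] -> cz \in `[node s z k, node s z k.+1] ->
  Fsum K y cy \is a fin_num -> Fsum K z cz \is a fin_num ->
  let w := convcomb l y z in let tw := l * cy + (1 - l) * cz in
  Fsum K w tw \is a fin_num /\
  l * fine (Fsum K y cy) + (1 - l) * fine (Fsum K z cz) <= fine (Fsum K w tw)
    ?= iff (cy == cz) && [forall j, cy - y j == cz - z j].
Proof.
move=> y_in z_in l01 cy_arc cz_arc Fy Fz w tw.
have := Fy; rewrite Fsum_fin_num => /andP[Ky0 /forallP Kyj].
have := Fz; rewrite Fsum_fin_num => /andP[Kz0 /forallP Kzj].
have [Kw0 leif0] := kernel_leif (K_kernel ord0)
  (or_introl (conj (arc_sub_cc y_in cy_arc) (arc_sub_cc z_in cz_arc))) Ky0 Kz0 l01.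
have leifj j : K (lift ord0 j) (tw - w j) \is a fin_num /\
    l * fine (K (lift ord0 j) (cy - y j)) + (1 - l) * fine (K (lift ord0 j) (cz - z j))
    <= fine (K (lift ord0 j) (tw - w j)) ?= iff (cy - y j == cz - z j).
  have -> : tw - w j = l * (cy - y j) + (1 - l) * (cz - z j).
    by rewrite /tw /w /convcomb; ring.
  apply: kernel_leif (Kyj j) (Kzj j) l01; first exact: K_kernel.
  have := arc_kernel_domain j y_in cy_arc; have := arc_kernel_domain j z_in cz_arc.
  by case: ifP => _ ? ?; [left | right].
have Fw : Fsum K w tw \is a fin_num.
  by rewrite Fsum_fin_num Kw0; apply/forallP => j; case: (leifj j).
split => //; rewrite !fine_Fsum // !mulrDr !mulr_sumr addrACA -big_split /=.
by have := leifD leif0 (leif_sum (fun j _ => (leifj j).2)) => /(_ xpredT).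
Qed.

Lemma mval_strictly_concave : strictly_concave_on (in_simplex s) (mval K s i).
Proof.
move=> y z l y_in z_in yz l01.
have [cy cy_arc [-> Fy]] := mval_attained y_in.
have [cz cz_arc [-> Fz]] := mval_attained z_in.
have [Fw leif_w] := Fsum_leif y_in z_in l01 cy_arc cz_arc Fy Fz.
apply: (lt_le_trans _ (ereal_sup_ubound _)); last first.
  by exists (l * cy + (1 - l) * cz) => //; exact: arc_convcomb.
rewrite -(fineK Fy) -(fineK Fz) -(fineK Fw) -!EFinM -EFinD lte_fin (lt_leif leif_w).
apply/negP => /andP[/eqP cyz /forallP /= yzj]; apply: yz.
by apply/funext => j; move: (yzj j); rewrite cyz => /eqP; lra.
Qed.
End arc.

Lemma strictly_concave_on_bigmin (R : realType) (n m : nat)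
    (D : ('I_n -> R) -> Prop) (g : 'I_m.+1 -> ('I_n -> R) -> \bar R) :
  (forall i, strictly_concave_on D (g i)) ->
  strictly_concave_on D (fun y => \big[Order.min/+oo%E]_(i < m.+1) g i y).
Proof.
move=> gC y z l Dy Dz yz l01; have /andP[l0 l1] := l01.
have le_gi i : (l%:E * \big[Order.min/+oo%E]_(i < m.+1) g i y +
    (1 - l)%:E * \big[Order.min/+oo%E]_(i < m.+1) g i z <=
    l%:E * g i y + (1 - l)%:E * g i z)%E.
  have l0' : (0 <= l%:E)%E by rewrite lee_fin ltW.
  have l1' : (0 <= (1 - l)%:E)%E by rewrite lee_fin subr_ge0 ltW.
  by apply: leeD; apply: lee_wpmul2l => //; exact: bigmin_le.
have lt_gi i := le_lt_trans (le_gi i) (gC i y z l Dy Dz yz l01).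
by apply: lt_bigmin => [|i _]; [exact: lt_le_trans (lt_gi ord0) (leey _)|].
Qed.

Theorem proposition7p2 (R : realType) (n : nat)
  (K : 'I_n.+1 -> R -> \bar R) (s : 'S_n) :
  (forall i, strictly_concave_kernel (K i)) ->
  (forall i : 'I_n.+1,
     (forall y, in_simplex s y -> mval K s i y \is a fin_num) /\
     strictly_concave_on (in_simplex s) (mval K s i)) /\
  strictly_concave_on (in_simplex s) (mmin K s).
Proof.
move=> K_kernel; have mval_conc i := mval_strictly_concave K_kernel (s := s) i.
split; last exact: strictly_concave_on_bigmin.
split => // y y_in.
by have [c _ [-> ]] := mval_attained K_kernel i y_in.
Qed.
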